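(* Let $\underline{l}=\min_k l_k$ and let $\mathcal{Y}_c=\{y\in\mathbb{Z}: \lfloor-\beta/\underline{l}\rfloor\le y\le\lceil\beta/\underline{l}\rceil+\alpha\}$. Let $\mathcal{Y}$ be an output alphabet with $\mathcal{Y}_c\subseteq\mathcal{Y}\subseteq\mathbb{Z}$, let $\Delta\ge 0$, and let $P_{\mathbf{Y}|\mathbf{X}}\in\Gamma_{\mathcal{Y}}(\Delta)$. Then there exists a function $F:\mathcal{Y}^n\to\mathcal{Y}_c^n$ such that the policy $F\circ P_{\mathbf{Y}|\mathbf{X}}$ (i.e. $\mathbf{x}\mapsto$ the law of $F(\mathbf{Y})$ for $\mathbf{Y}\sim P_{\mathbf{Y}|\mathbf{X}=\mathbf{x}}$) belongs to $\Gamma_{\mathcal{Y}_c}(\Delta)$.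
   Context: Fix integers $\alpha\ge 1$, $\beta\ge 0$, $n\ge 1$, and an initial state $s_0\in\mathcal{S}=\{0,\dots,\beta\}$. Let $\mathcal{X}=\{0,\dots,\alpha\}$. For $\mathbf{x}\in\mathcal{X}^n$, $\mathbf{y}\in\mathbb{Z}^n$ the battery states are $s_i=s_0+\sum_{k=0}^{i-1}y_k-\sum_{k=0}^{i-1}x_k$, $i=0,\dots,n$, and for an output alphabet $\mathcal{Y}\subseteq\mathbb{Z}$ with $\mathcal{X}\subseteq\mathcal{Y}$, $\mathcal{Y}^n(s_0,\mathbf{x})=\{\mathbf{y}\in\mathcal{Y}^n: s_i\in\{0,\dots,\beta\}\ \forall i=0,\dots,n\}$. A battery policy with output alphabet $\mathcal{Y}$ is a conditional distribution $P_{\mathbf{Y}|\mathbf{X}}$ from $\mathcal{X}^n$ to $\mathcal{Y}^n$; it is feasible if $\mathrm{supp}(P_{\mathbf{Y}|\mathbf{X}=\mathbf{x}})\subseteq\mathcal{Y}^n(s_0,\mathbf{x})$ for all $\mathbf{x}$; the set of feasible policies is $\Omega_{\mathcal{Y}}(s_0)$. Market price: a positive integer $K$, block lengths $l_0,\dots,l_{K-1}\ge 1$ with $\sum_k l_k=n$, prices $m_0,\dots,m_{K-1}\in\mathbb{R}$, and $\mathbf{m}\in\mathbb{R}^n$ the vector equal to $m_k$ on the $l_k$ consecutive time steps of block $k$ (blocks in order). The cost of a policy at $\mathbf{x}$ is $g(P_{\mathbf{Y}|\mathbf{X}},\mathbf{x})=\mathbb{E}_{P_{\mathbf{Y}|\mathbf{X}=\mathbf{x}}}[\mathbf{m}^T\mathbf{Y}]-\min_{\mathbf{y}\in\mathcal{Y}^n(s_0,\mathbf{x})}\mathbf{m}^T\mathbf{y}$.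 For $\Delta\ge0$, $\Gamma_{\mathcal{Y}}(\Delta)=\{P_{\mathbf{Y}|\mathbf{X}}\in\Omega_{\mathcal{Y}}(s_0): g(P_{\mathbf{Y}|\mathbf{X}},\mathbf{x})\le\Delta\ \forall\mathbf{x}\in\mathcal{X}^n\}$ is the set of feasible $\Delta$-affordable policies. *)

From HB Require Import structures.
From mathcomp Require Import all_boot all_order all_algebra.
Set Implicit Arguments.
Unset Strict Implicit.
Unset Printing Implicit Defensive.
Import Order.TTheory GRing.Theory Num.Theory.
Local Open Scope ring_scope.

(* Input sequences x in X^n, X = {0..alpha}: n.-tuple 'I_alpha.+1.
   Output sequences y in Z^n: n.-tuple int. *)

Definition state (alpha n s0 : nat) (x : n.-tuple 'I_alpha.+1)
    (y : n.-tuple int) (i : nat) : int :=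
  s0%:Z + \sum_(k < n | (k < i)%N) tnth y k
        - \sum_(k < n | (k < i)%N) (nat_of_ord (tnth x k))%:Z.

Definition Yn_mem (Y : pred int) (alpha beta n s0 : nat)
    (x : n.-tuple 'I_alpha.+1) (y : n.-tuple int) : bool :=
  all Y y &&
  [forall i : 'I_n.+1, (0 <= state s0 x y i) && (state s0 x y i <= beta%:Z)].

(* The finite box [-beta, beta+alpha]^n, which contains Y^n(s0,x) for every
   Y ⊆ Z (since y_k = s_{k+1} - s_k + x_k).  Used only to enumerate the
   finite set Y^n(s0,x) in order to take its minimum. *)
Definition box (alpha beta n : nat) : seq (n.-tuple int) :=
  [seq map_tuple (fun i : 'I_(alpha + 2 * beta).+1 => (nat_of_ord i)%:Z - beta%:Z) t
  | t : n.-tuple 'I_(alpha + 2 * beta).+1].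

Definition Yn_seq (Y : pred int) (alpha beta n s0 : nat)
    (x : n.-tuple 'I_alpha.+1) : seq (n.-tuple int) :=
  [seq y <- box alpha beta n | Yn_mem Y beta s0 x y].

Definition mvec (R : realFieldType) (K : nat) (l : 'I_K -> nat) (mk : 'I_K -> R)
    (t : nat) : R :=
  \sum_(k < K)
     (if ((\sum_(j < K | (j < k)%N) l j <= t)
          && (t < \sum_(j < K | (j <= k)%N) l j))%N
      then mk k else 0).

Definition mdot (R : realFieldType) (K : nat) (l : 'I_K -> nat) (mk : 'I_K -> R)
    (n : nat) (y : n.-tuple int) : R :=
  \sum_(i < n) mvec l mk i * (tnth y i)%:~R.

(* minimum of f over a finite list (0 on the empty list; never used there) *)
Definition min_over (R : realFieldType) (T : Type) (S : seq T) (f : T -> R) : R :=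
  if S is y0 :: _ then \big[Num.min/f y0]_(y <- S) f y else 0.

(* A finitely supported probability distribution on Z^n, given as a list
   of (outcome, weight) pairs; its law assigns to y the total weight of y. *)
Definition fdist (R : realFieldType) (n : nat) := seq (n.-tuple int * R).

Definition is_dist (R : realFieldType) (n : nat) (d : fdist R n) : bool :=
  all (fun p => 0 <= p.2) d && (\sum_(p <- d) p.2 == 1).

Definition law (R : realFieldType) (n : nat) (d : fdist R n) (y : n.-tuple int) : R :=
  \sum_(p <- d | p.1 == y) p.2.

Definition expect_cost (R : realFieldType) (K : nat) (l : 'I_K -> nat)
    (mk : 'I_K -> R) (n : nat) (d : fdist R n) : R :=
  \sum_(p <- d) p.2 * @mdot R K l mk n p.1.

Definition policy (R : realFieldType) (alpha n : nat) :=
  n.-tuple 'I_alpha.+1 -> fdist R n.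

Definition cost (R : realFieldType) (Y : pred int) (alpha beta n s0 K : nat)
    (l : 'I_K -> nat) (mk : 'I_K -> R) (P : policy R alpha n)
    (x : n.-tuple 'I_alpha.+1) : R :=
  expect_cost l mk (P x) - min_over (Yn_seq Y beta s0 x) (@mdot R K l mk n).

Definition in_Gamma (R : realFieldType) (Y : pred int) (alpha beta n s0 K : nat)
    (l : 'I_K -> nat) (mk : 'I_K -> R) (Delta : R) (P : policy R alpha n) : Prop :=
  forall x : n.-tuple 'I_alpha.+1,
    [/\ is_dist (P x),
        (forall y, law (P x) y != 0 -> Yn_mem Y beta s0 x y)
      & cost Y beta s0 l mk P x <= Delta].

Definition push (R : realFieldType) (alpha n : nat)
    (F : n.-tuple int -> n.-tuple int) (P : policy R alpha n) : policy R alpha n :=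
  fun x => [seq (F p.1, p.2) | p <- P x].

(* underline l = min_k l_k  (n is a neutral start value since l_k <= n) *)
Definition lmin (K n : nat) (l : 'I_K -> nat) : nat := \big[minn/n]_(k < K) l k.

(* Y_c = { y : floor(-beta/lmin) <= y <= ceil(beta/lmin) + alpha };
   intdiv's %/ with positive divisor is floor division, and
   ceil(beta/L) = - floor(-beta/L). *)
Definition Yc (alpha beta L : nat) : pred int :=
  fun y => (((- beta%:Z) %/ L%:Z)%Z <= y)
           && (y <= - ((- beta%:Z) %/ L%:Z)%Z + alpha%:Z).

(* Inside one price block the price m^T y only depends on the block sum of y,
   so output may be moved freely between times of the same block.  Let y be
   feasible for some input and let y_t > hi (resp. y_t < lo).  The block of t
   contains an output below hi (resp. above lo): otherwise the net inflow over
   the block, which has length at least L, would exceed beta (resp. fall below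
   -beta).  Moving one unit between t and the NEAREST such partner keeps the
   price, strictly decreases the total excess mu of y outside [lo, hi], and
   keeps y feasible for every input for which it was feasible, since the
   states between the two times only move away from the bound they approach.
   Iterating yields an output in Y_c^n (clip_exists), and choosing one for
   every y yields the map F (clip_function).  The image policy F o P has the
   same weights and the same expected price as P, a feasible support, and the
   minimal price over the smaller alphabet Y_c can only be larger; hence its
   cost is still at most Delta. *)

From HB Require Import structures.
From mathcomp Require Import all_boot all_order all_algebra.
From mathcomp Require Import zify ring lra.
Set Implicit Arguments.
Unset Strict Implicit.
Unset Printing Implicit Defensive.
Import Order.TTheory GRing.Theory Num.Theory.
Local Open Scope ring_scope.

Lemma increments_gain (s : nat -> int) (c : int) a b k :
  (a <= k < b)%N ->
  (forall t, (a <= t < b)%N -> c + (t == k)%:Z <= s t.+1 - s t) ->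
  s a + (b - a)%:Z * c + 1 <= s b.
Proof.
move=> kab inc; have ab : (a <= b)%N by lia.
have := ler_sum_nat inc; rewrite telescope_sumr // big_split /= sumr_const_nat.
have -> : \sum_(a <= t < b) (t == k)%:Z = 1.
  rewrite (eq_bigr (fun t => if t == k then 1 else 0)); last by move=> t _; case: eqP.
  by rewrite -big_mkcond big_nat1_eq kab.
rewrite -mulr_natr natz; lia.
Qed.

Lemma nearest_after (P : pred nat) t j0 : (t < j0)%N -> P j0 ->
  exists j, [/\ (t < j <= j0)%N, P j & forall u, (t < u < j)%N -> ~~ P u].
Proof.
move=> tj0 Pj0; have ex : exists m, (t < m)%N && P m by exists j0; rewrite tj0.
case: (ex_minnP ex) => j /andP[tj Pj] jmin; exists j; split => //.
- by rewrite tj /=; apply: jmin; rewrite tj0.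
- move=> u /andP[tu uj]; apply/negP => Pu.
  by have := jmin u; rewrite tu Pu => /(_ isT); lia.
Qed.

Lemma nearest_before (P : pred nat) t j0 : (j0 < t)%N -> P j0 ->
  exists j, [/\ (j0 <= j < t)%N, P j & forall u, (j < u < t)%N -> ~~ P u].
Proof.
move=> j0t Pj0; have ex : exists m, (m < t)%N && P m by exists j0; rewrite j0t.
have ub : forall m, (m < t)%N && P m -> (m <= t)%N by move=> m /andP[/ltnW].
case: (ex_maxnP ex ub) => j /andP[jt Pj] jmax; exists j; split => //.
- by rewrite jt andbT; apply: jmax; rewrite j0t.
- move=> u /andP[ju ut]; apply/negP => Pu.
  by have := jmax u; rewrite ut Pu => /(_ isT); lia.
Qed.

Lemma leq_sum_subpred (I : finType) (P Q : pred I) (F : I -> nat) :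
  subpred P Q -> (\sum_(i | P i) F i <= \sum_(i | Q i) F i)%N.
Proof.
move=> PQ; rewrite [X in (_ <= X)%N](bigID P) /= (eq_bigl P) ?leq_addr // => i.
by apply/andP/idP => [[]//| Pi]; rewrite (PQ i Pi).
Qed.

Lemma min_over_subset (R : realFieldType) (T : eqType) (S1 S2 : seq T) (f : T -> R) :
  {subset S1 <= S2} -> S1 != [::] -> min_over S2 f <= min_over S1 f.
Proof.
case: S1 => [//|a S1] sub _; case: S2 sub => [|b S2] sub; first by have := sub a (mem_head _ _).
have below z : z \in a :: S1 -> min_over (b :: S2) f <= f z.
  by move=> /sub zS2; apply: ge_bigmin_seq.
rewrite [X in _ <= X]/min_over [X in _ <= X]big_seq.
apply: le_bigmin; [apply: below; exact: mem_head | exact: below].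
Qed.

Section ImageDistribution.
Variables (R : realFieldType) (n : nat) (F : n.-tuple int -> n.-tuple int) (d : fdist R n).

Lemma law_nz p : is_dist d -> p \in d -> p.2 != 0 -> law d p.1 != 0.
Proof.
move=> /andP[ge0 _] pd pnz; rewrite /law big_seq_cond psumr_eq0; last first.
  by move=> q /andP[qd _]; apply: (allP ge0 q qd).
by apply/allP => /(_ p pd); rewrite pd eqxx /=; apply/negP.
Qed.

Lemma is_dist_image : is_dist d -> is_dist [seq (F p.1, p.2) | p <- d].
Proof. by rewrite /is_dist all_map big_map. Qed.

Lemma law_image_support y : law [seq (F p.1, p.2) | p <- d] y != 0 ->
  exists2 p, p \in d & (p.2 != 0) && (F p.1 == y).
Proof.
rewrite /law big_map => nz; apply/hasP; move: nz; apply: contraNT => /hasPn none.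
rewrite big1_seq // => p /andP[Fp pd]; move: (none p pd); rewrite Fp andbT negbK.
by move/eqP.
Qed.

Lemma expect_cost_image K (l : 'I_K -> nat) (mk : 'I_K -> R) :
  (forall p, p \in d -> p.2 != 0 -> mdot l mk (F p.1) = mdot l mk p.1) ->
  expect_cost l mk [seq (F p.1, p.2) | p <- d] = expect_cost l mk d.
Proof.
move=> same; rewrite /expect_cost big_map; apply: eq_big_seq => p pd /=.
by have [->|pnz] := eqVneq p.2 0; rewrite ?mul0r // same.
Qed.
End ImageDistribution.

Section Battery.
Variables (alpha beta n s0 : nat).
Implicit Types (x : n.-tuple 'I_alpha.+1) (y : n.-tuple int).

Definition yv y (t : nat) : int := nth 0 y t.
Definition xv x (t : nat) : int := (nth ord0 x t : nat)%:Z.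

Definition feas x y : bool :=
  [forall i : 'I_n.+1, (0 <= state s0 x y i) && (state s0 x y i <= beta%:Z)].

Lemma xv_bounds x t : 0 <= xv x t <= alpha%:Z.
Proof. by rewrite /xv; have := ltn_ord (nth ord0 x t); lia. Qed.

Lemma state_0 x y : state s0 x y 0 = s0%:Z.
Proof. by rewrite /state !big1 ?subr0 ?addr0. Qed.

Lemma state_S x y t : (t < n)%N ->
  state s0 x y t.+1 = state s0 x y t + yv y t - xv x t.
Proof.
move=> tn; have split_last (G : 'I_n -> int) :
    \sum_(k < n | (k < t.+1)%N) G k = \sum_(k < n | (k < t)%N) G k + G (Ordinal tn).
  rewrite (bigD1 (Ordinal tn)) //= addrC; congr (_ + _).
  by apply: eq_bigl => k; rewrite -val_eqE /=; lia.
by rewrite /state !split_last /yv /xv (tnth_nth 0) (tnth_nth ord0) /=; lia.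
Qed.

Lemma feasP x y i : feas x y -> (i <= n)%N ->
  0 <= state s0 x y i /\ state s0 x y i <= beta%:Z.
Proof. by move=> /forallP fy i_n; have /andP := fy (Ordinal (i_n : i < n.+1)%N). Qed.

Lemma state_gain x y (c : int) a b k : (a <= k < b)%N -> (b <= n)%N ->
  (forall t, (a <= t < b)%N -> c + (t == k)%:Z <= yv y t - xv x t) ->
  state s0 x y a + (b - a)%:Z * c + 1 <= state s0 x y b.
Proof.
move=> kab bn inc; apply: increments_gain kab _ => t tab.
by rewrite state_S; [have := inc t tab; lia | lia].
Qed.

Lemma state_loss x y (c : int) a b k : (a <= k < b)%N -> (b <= n)%N ->
  (forall t, (a <= t < b)%N -> yv y t - xv x t <= c - (t == k)%:Z) ->
  state s0 x y b + 1 <= state s0 x y a + (b - a)%:Z * c.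
Proof.
move=> kab bn inc.
suff : - state s0 x y a + (b - a)%:Z * - c + 1 <= - state s0 x y b.
  by rewrite mulrN; lia.
apply: (increments_gain (s := fun i => - state s0 x y i)) kab _ => t tab.
by rewrite state_S; [have := inc t tab; lia | lia].
Qed.

Definition transfer y (j k : nat) : n.-tuple int :=
  [tuple yv y t + ((t == j :> nat)%:Z - (t == k :> nat)%:Z) | t < n].

Lemma yv_transfer y j k t : (t < n)%N ->
  yv (transfer y j k) t = yv y t + ((t == j)%:Z - (t == k)%:Z).
Proof.
by move=> tn; rewrite /yv -[t]/(nat_of_ord (Ordinal tn)) -tnth_nth tnth_mktuple.
Qed.

Lemma state_transfer x y j k i : (i <= n)%N ->
  state s0 x (transfer y j k) i = state s0 x y i + ((j < i)%N%:Z - (k < i)%N%:Z).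
Proof.
elim: i => [|i IH] i_n; first by rewrite !state_0 subrr addr0.
have ltS m : (m < i.+1)%N%:Z = (m < i)%N%:Z + (i == m)%:Z.
  by rewrite ltnS leq_eqVlt eq_sym; case: (ltngtP m i).
rewrite !state_S // IH; last exact: ltnW.
by rewrite yv_transfer // !ltS (eq_sym i j) (eq_sym i k); ring.
Qed.

(* Moving output later (k < j) only lowers the states on (k, j]. *)
Lemma feas_transfer_later x y j k : feas x y -> (k < j)%N ->
  (forall i, (k < i <= j)%N -> 1 <= state s0 x y i) -> feas x (transfer y j k).
Proof.
move=> fy kj pos; apply/forallP => i; have i_n : (i <= n)%N := ltn_ord i.
rewrite state_transfer //; have := feasP fy i_n.
by case: (boolP (k < i <= j)%N) => [/pos|]; lia.
Qed.

(* Moving output earlier (j < k) only raises the states on (j, k]. *)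
Lemma feas_transfer_earlier x y j k : feas x y -> (j < k)%N ->
  (forall i, (j < i <= k)%N -> state s0 x y i < beta%:Z) -> feas x (transfer y j k).
Proof.
move=> fy jk low; apply/forallP => i; have i_n : (i <= n)%N := ltn_ord i.
rewrite state_transfer //; have := feasP fy i_n.
by case: (boolP (j < i <= k)%N) => [/low|]; lia.
Qed.

(* Feasible outputs are bounded: y_t = s_{t+1} - s_t + x_t. *)
Lemma yv_bounds x y t : feas x y -> (t < n)%N ->
  - beta%:Z <= yv y t <= beta%:Z + alpha%:Z.
Proof.
move=> fy tn; have := feasP fy (ltnW tn); have := feasP fy tn.
by rewrite state_S //; have := xv_bounds x t; lia.
Qed.

Lemma feas_in_box x y : feas x y -> y \in box alpha beta n.
Proof.
move=> fy; pose z := [tuple inord (absz (yv y t + beta%:Z)) : 'I_(alpha + 2 * beta).+1 | t < n].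
apply/imageP; exists z => //; apply: eq_from_tnth => t.
have := yv_bounds fy (ltn_ord t); rewrite tnth_map tnth_mktuple (tnth_nth 0).
by move=> bounds; rewrite inordK -/(yv y t); lia.
Qed.

(* The idle policy y = x leaves the battery at its initial state. *)
Definition idle x : n.-tuple int := map_tuple (fun i : 'I_alpha.+1 => (i : nat)%:Z) x.

Lemma feas_idle x : (s0 <= beta)%N -> feas x (idle x).
Proof.
move=> s0_le; apply/forallP => i; rewrite /state.
under eq_bigr => k _ do rewrite tnth_map.
by rewrite addrK; apply/andP; split; lia.
Qed.
End Battery.

Section Blocks.
Variables (R : realFieldType) (n K : nat) (l : 'I_K -> nat) (mk : 'I_K -> R).

(* Price block b occupies the times [Bs b, Be b). *)
Definition Bs (b : nat) : nat := (\sum_(j < K | (j < b)%N) l j)%N.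
Definition Be (b : nat) : nat := (\sum_(j < K | (j <= b)%N) l j)%N.

Lemma Be_Bs (b : 'I_K) : Be b = (Bs b + l b)%N.
Proof.
rewrite /Be (bigD1 b) //= addnC; congr (_ + _)%N.
by apply: eq_bigl => j; rewrite -val_eqE /=; lia.
Qed.

Lemma Be_le_Bs (b b' : nat) : (b < b')%N -> (Be b <= Bs b')%N.
Proof. by move=> bb'; apply: leq_sum_subpred => j /=; lia. Qed.

Lemma mvec_block (b : 'I_K) t : (Bs b <= t < Be b)%N -> mvec l mk t = mk b.
Proof.
move=> tb; rewrite /mvec (bigD1 b) //= -/(Bs b) -/(Be b) tb big1 ?addr0 //.
move=> b' b'b; rewrite -/(Bs b') -/(Be b'); case: ifP => // tb'.
have [lt|gt|eq] := ltngtP b' b.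
- by have := Be_le_Bs lt; lia.
- by have := Be_le_Bs gt; lia.
- by move: b'b; rewrite -val_eqE /= eq eqxx.
Qed.

Lemma mdot_transfer (y : n.-tuple int) j k : (j < n)%N -> (k < n)%N ->
  mdot l mk (transfer y j k) = mdot l mk y + mvec l mk j - mvec l mk k.
Proof.
move=> jn kn; have pick i : (i < n)%N ->
    \sum_(t < n) mvec l mk t * ((t == i :> nat)%:Z)%:~R = mvec l mk i.
  move=> ni; rewrite (bigD1 (Ordinal ni)) //= eqxx mulr1 big1 ?addr0 // => t.
  by rewrite -val_eqE /= => /negbTE ->; rewrite mulr0.
rewrite /mdot -(pick j jn) -(pick k kn) -big_split -sumrB /=; apply: eq_bigr => t _.
rewrite !(tnth_nth 0) -/(yv (transfer y j k) t) -/(yv y t) yv_transfer //.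
by rewrite !intrD intrN; ring.
Qed.

Hypothesis l_sum : (\sum_(k < K) l k)%N = n.

Lemma Be_le_n b : (Be b <= n)%N.
Proof. by rewrite -l_sum; apply: (@leq_sum_subpred _ _ xpredT). Qed.

Lemma find_block t : (t < n)%N -> exists b : 'I_K, (Bs b <= t < Be b)%N.
Proof.
move=> tn; have K_gt0 : (0 < K)%N by case: K l l_sum => // l0; rewrite big_ord0 => n0; lia.
have ex : exists m, (m < K)%N && (t < Be m)%N.
  exists K.-1; rewrite prednK // leqnn /= /Be.
  rewrite (eq_bigl xpredT) ?l_sum // => j; have := ltn_ord j; lia.
case: (ex_minnP ex) => m /andP[mK tm] mmin; exists (Ordinal mK); rewrite /= tm andbT.
case: m mK tm mmin => [|m] mK tm mmin; first by rewrite /Bs big1.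
have : ~~ (t < Be m)%N.
  by apply/negP => tm'; have := mmin m; rewrite tm' (ltnW mK) => /(_ isT); lia.
have -> : Bs m.+1 = Be m by [].
by rewrite -leqNgt.
Qed.
End Blocks.

Section Clipping.
Variables (alpha beta n L : nat).
Implicit Types (x : n.-tuple 'I_alpha.+1) (y : n.-tuple int).

(* Y_c is the integer interval [lo, hi], lo = floor(-beta/L), hi = alpha - lo. *)
Definition lo : int := ((- beta%:Z) %/ L%:Z)%Z.
Definition hi : int := - lo + alpha%:Z.

Lemma Yc_E v : Yc alpha beta L v = (lo <= v <= hi).
Proof. by []. Qed.

Lemma not_all_Yc y : ~~ all (Yc alpha beta L) y ->
  exists2 t, (t < n)%N & (yv y t < lo) || (hi < yv y t).
Proof.
rewrite -has_predC => /(has_nthP 0) [t]; rewrite size_tuple => tn yt.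
by exists t => //; move: yt; rewrite /= Yc_E -/(yv y t); lia.
Qed.

(* How far an output lies outside [lo, hi]; mu sums it over all times and
   is the measure that the clipping procedure decreases. *)
Definition excess (v : int) : nat := absz (Num.max 0 (v - hi) + Num.max 0 (lo - v)).
Definition mu y : nat := (\sum_(t < n) excess (yv y t))%N.

Lemma mu_decrease y y' i : (i < n)%N ->
  (forall t, (t < n)%N -> excess (yv y' t) + (t == i) <= excess (yv y t))%N ->
  (mu y' < mu y)%N.
Proof.
move=> i_n le_exc; have : (\sum_(t < n) (excess (yv y' t) + (t == i :> nat)) <= mu y)%N.
  by apply: leq_sum => t _; apply: le_exc.
have one : (\sum_(t < n) (t == i :> nat) = 1)%N.
  rewrite (bigD1 (Ordinal i_n)) //= eqxx big1 // => t.
  by rewrite -val_eqE /= => /negbTE ->.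
by rewrite big_split /= one addn1.
Qed.

Hypothesis L_gt0 : (0 < L)%N.

(* lo <= 0 and L * lo <= -beta: L consecutive net outflows of at least -lo
   empty a full battery, L consecutive net inflows of at least -lo = hi - alpha
   fill an empty one. *)
Lemma lo_bounds : lo * L%:Z <= - beta%:Z /\ lo <= 0.
Proof.
have lo_L : lo * L%:Z <= - beta%:Z by apply: lez_floor; lia.
have L_pos : 0 < L%:Z by rewrite ltz_nat.
by split => //; nia.
Qed.

Lemma mu_transfer y j k : (j < n)%N -> (k < n)%N -> j != k ->
  (yv y j < hi < yv y k) \/ (yv y j < lo < yv y k) ->
  (mu (transfer y j k) < mu y)%N.
Proof.
move=> jn kn jk bounds; have [_ lo_le0] := lo_bounds.
case: bounds => /andP[yj yk]; [apply: (mu_decrease kn) | apply: (mu_decrease jn)];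
  move=> t tn; rewrite yv_transfer // /excess /hi in yj yk *;
  (case: (eqVneq t j) => [->|_]; first by rewrite (negbTE jk); lia);
  by case: (eqVneq t k) => [->|_]; lia.
Qed.

(* The idle output x lies in Y_c^n, so the Y_c-feasible set is never empty. *)
Lemma idle_in_Yn_seq s0 x : (s0 <= beta)%N -> idle x \in Yn_seq (Yc alpha beta L) beta s0 x.
Proof.
move=> s0_le; have idle_feas := feas_idle x s0_le.
rewrite mem_filter (feas_in_box idle_feas) andbT; apply/andP; split => //.
apply/allP => _ /mapP [i _ ->]; have [_ lo_le0] := lo_bounds.
by rewrite Yc_E /hi; have := ltn_ord i; lia.
Qed.

Section Transfers.
Variables (s0 : nat) (R : realFieldType) (K : nat) (l : 'I_K -> nat) (mk : 'I_K -> R).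
Hypotheses (l_sum : (\sum_(k < K) l k)%N = n) (l_ge_L : forall b, (L <= l b)%N).

(* A block of L or more outputs, all >= hi and one > hi, would overfill the
   battery; so an output above hi has a partner below hi in its block. *)
Lemma partner_below_hi x y (b : 'I_K) k : feas beta s0 x y ->
  (Bs l b <= k < Be l b)%N -> hi < yv y k ->
  exists2 j, (Bs l b <= j < Be l b)%N & yv y j < hi.
Proof.
move=> fy kb yk.
case: (boolP (has (fun j => yv y j < hi) (index_iota (Bs l b) (Be l b)))).
  by case/hasP => j; rewrite mem_index_iota; exists j.
move/hasPn => above; have [lo_L lo_le0] := lo_bounds.
have fill : state s0 x y (Bs l b) + (Be l b - Bs l b)%:Z * - lo + 1 <= state s0 x y (Be l b).
  apply: state_gain kb (Be_le_n l_sum b) _ => t tb.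
  have := above t; rewrite mem_index_iota tb -leNgt => /(_ isT) yt.
  have := xv_bounds x t; rewrite /hi in yk yt.
  by case: (eqVneq t k) => [->|_]; lia.
have end_n := Be_le_n l_sum b; rewrite Be_Bs addKn in fill end_n.
have := feasP fy end_n; have := feasP fy (leq_trans (leq_addr _ _) end_n).
by have := l_ge_L b; nia.
Qed.

Lemma partner_above_lo x y (b : 'I_K) k : feas beta s0 x y ->
  (Bs l b <= k < Be l b)%N -> yv y k < lo ->
  exists2 j, (Bs l b <= j < Be l b)%N & lo < yv y j.
Proof.
move=> fy kb yk.
case: (boolP (has (fun j => lo < yv y j) (index_iota (Bs l b) (Be l b)))).
  by case/hasP => j; rewrite mem_index_iota; exists j.
move/hasPn => below; have [lo_L lo_le0] := lo_bounds.
have drain : state s0 x y (Be l b) + 1 <= state s0 x y (Bs l b) + (Be l b - Bs l b)%:Z * lo.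
  apply: state_loss kb (Be_le_n l_sum b) _ => t tb.
  have := below t; rewrite mem_index_iota tb -leNgt => /(_ isT) yt.
  have := xv_bounds x t.
  by case: (eqVneq t k) => [->|_]; lia.
have end_n := Be_le_n l_sum b; rewrite Be_Bs addKn in drain end_n.
have := feasP fy end_n; have := feasP fy (leq_trans (leq_addr _ _) end_n).
by have := l_ge_L b; nia.
Qed.

Definition improves y y' := [/\ (mu y' < mu y)%N, mdot l mk y' = mdot l mk y &
  forall x, feas beta s0 x y -> feas beta s0 x y'].

Lemma improves_transfer y (b : 'I_K) j k :
  (Bs l b <= j < Be l b)%N -> (Bs l b <= k < Be l b)%N ->
  (yv y j < hi < yv y k) \/ (yv y j < lo < yv y k) ->
  (forall x, feas beta s0 x y -> feas beta s0 x (transfer y j k)) ->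
  improves y (transfer y j k).
Proof.
move=> jb kb toward feasible; have end_n := Be_le_n l_sum b.
have jn : (j < n)%N by lia.
have kn : (k < n)%N by lia.
have jk : j != k by apply/eqP => jk; move: toward; rewrite jk; lia.
split => //; first exact: mu_transfer.
by rewrite mdot_transfer // (mvec_block mk jb) (mvec_block mk kb) addrK.
Qed.

(* An output above hi is improved by moving one unit to the nearest
   output below hi in its block: the states in between only move away
   from the bound they approach. *)
Lemma improve_above_hi x0 y t : feas beta s0 x0 y -> (t < n)%N -> hi < yv y t ->
  exists y', improves y y'.
Proof.
move=> fy tn yt; have [b tb] := find_block l_sum tn; have [_ lo_le0] := lo_bounds.
have [j0 j0b yj0] := partner_below_hi fy tb yt; have end_n := Be_le_n l_sum b.
have inflow x u : yv y u < hi = false -> 0 <= yv y u - xv x u.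
  by move/negbT; rewrite -leNgt /hi; have := xv_bounds x u; lia.
have [tj0|j0t|tj0] := ltngtP t j0; last by move: yj0 yt; rewrite tj0; lia.
- have [j [tj yj between]] := nearest_after (P := fun u => yv y u < hi) tj0 yj0.
  exists (transfer y j t); apply: (improves_transfer (b := b)); [lia|done|by left; lia|].
  move=> x fx; apply: feas_transfer_later => //; first by lia.
  move=> i ti; have := feasP fx (ltnW tn).
  suff : state s0 x y t + (i - t)%:Z * 0 + 1 <= state s0 x y i by lia.
  apply: (state_gain s0 (k := t)); [lia | lia | move=> u tu].
  have := xv_bounds x u; case: (eqVneq u t) => [->|ut]; first by move: yt; rewrite /hi; lia.
  by have := inflow x u (negbTE (between u _)); lia.
- have [j [j0j yj between]] := nearest_before (P := fun u => yv y u < hi) j0t yj0.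
  exists (transfer y j t); apply: (improves_transfer (b := b)); [lia|done|by left; lia|].
  move=> x fx; apply: feas_transfer_earlier => //; first by lia.
  move=> i ji; have := feasP fx tn.
  suff : state s0 x y i + (t.+1 - i)%:Z * 0 + 1 <= state s0 x y t.+1 by lia.
  apply: (state_gain s0 (k := t)); [lia | lia | move=> u iu].
  have := xv_bounds x u; case: (eqVneq u t) => [->|ut]; first by move: yt; rewrite /hi; lia.
  by have := inflow x u (negbTE (between u _)); lia.
Qed.

Lemma improve_below_lo x0 y t : feas beta s0 x0 y -> (t < n)%N -> yv y t < lo ->
  exists y', improves y y'.
Proof.
move=> fy tn yt; have [b tb] := find_block l_sum tn; have [_ lo_le0] := lo_bounds.
have [j0 j0b yj0] := partner_above_lo fy tb yt; have end_n := Be_le_n l_sum b.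
have outflow x u : lo < yv y u = false -> yv y u - xv x u <= 0.
  by move/negbT; rewrite -leNgt; have := xv_bounds x u; lia.
have [tj0|j0t|tj0] := ltngtP t j0; last by move: yj0 yt; rewrite tj0; lia.
- have [j [tj yj between]] := nearest_after (P := fun u => lo < yv y u) tj0 yj0.
  exists (transfer y t j); apply: (improves_transfer (b := b)); [done|lia|by right; lia|].
  move=> x fx; apply: feas_transfer_earlier => //; first by lia.
  move=> i ti; have := feasP fx (ltnW tn).
  suff : state s0 x y i + 1 <= state s0 x y t + (i - t)%:Z * 0 by lia.
  apply: (state_loss s0 (k := t)); [lia | lia | move=> u tu].
  have := xv_bounds x u; case: (eqVneq u t) => [->|ut]; first by move: yt; lia.
  by have := outflow x u (negbTE (between u _)); lia.
- have [j [j0j yj between]] := nearest_before (P := fun u => lo < yv y u) j0t yj0.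
  exists (transfer y t j); apply: (improves_transfer (b := b)); [done|lia|by right; lia|].
  move=> x fx; apply: feas_transfer_later => //; first by lia.
  move=> i ji; have := feasP fx tn.
  suff : state s0 x y t.+1 + 1 <= state s0 x y i + (t.+1 - i)%:Z * 0 by lia.
  apply: (state_loss s0 (k := t)); [lia | lia | move=> u iu].
  have := xv_bounds x u; case: (eqVneq u t) => [->|ut]; first by move: yt; lia.
  by have := outflow x u (negbTE (between u _)); lia.
Qed.

(* Improving while possible (mu is a natural number) reaches an output in
   Y_c^n with the same price that is feasible wherever y is. *)
Lemma clip_exists y : (exists x0, feas beta s0 x0 y) ->
  exists y', [/\ all (Yc alpha beta L) y', mdot l mk y' = mdot l mk y &
                 forall x, feas beta s0 x y -> feas beta s0 x y'].
Proof.
have [N] := ubnP (mu y); elim: N y => // N IH y muN [x0 fy].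
case: (boolP (all (Yc alpha beta L) y)) => [Yy|/not_all_Yc [t tn /orP yt]].
  by exists y.
have [y1 [mu1 mdot1 feas1]] : exists y1, improves y y1.
  by case: yt => [/(improve_below_lo fy tn)|/(improve_above_hi fy tn)].
have [y2 [Yy2 mdot2 feas2]] := IH y1 (leq_trans mu1 muN) (ex_intro _ x0 (feas1 x0 fy)).
by exists y2; split => [//||x /feas1/feas2//]; rewrite mdot2.
Qed.

Lemma clip_function : exists F : n.-tuple int -> n.-tuple int, forall y,
  all (Yc alpha beta L) (F y) /\
  forall x, feas beta s0 x y -> mdot l mk (F y) = mdot l mk y /\ feas beta s0 x (F y).
Proof.
pose clipped (y y' : n.-tuple int) := all (Yc alpha beta L) y' &&
  ([exists x : n.-tuple 'I_alpha.+1, feas beta s0 x y] ==> (mdot l mk y' == mdot l mk y)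
   && [forall x : n.-tuple 'I_alpha.+1, feas beta s0 x y ==> feas beta s0 x y']).
have clippable y : exists y', clipped y y'.
  case: (boolP [exists x : n.-tuple 'I_alpha.+1, feas beta s0 x y]); last first.
    move=> none; exists (nseq_tuple n 0); rewrite /clipped (negbTE none) andbT all_nseq.
    by have [_ lo_le0] := lo_bounds; rewrite Yc_E /hi; apply/orP; right; lia.
  move=> /existsP/clip_exists [y' [Yy' mdot' feas']].
  exists y'; rewrite /clipped Yy' mdot' eqxx /=; apply/implyP => _.
  by apply/forallP => x; apply/implyP; apply: feas'.
exists (fun y => xchoose (clippable y)) => y.
have /andP[Yy' fits] := xchooseP (clippable y); split => // x fx.
move: fits; rewrite (introT existsP (ex_intro _ x fx)) /=.
by case/andP => /eqP -> /forallP/(_ x)/implyP/(_ fx).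
Qed.
End Transfers.
End Clipping.

Lemma lmin_bounds (n K : nat) (l : 'I_K -> nat) : (0 < n)%N -> (forall k, 0 < l k)%N ->
  (0 < lmin n l)%N /\ forall k, (lmin n l <= l k)%N.
Proof.
move=> n_gt0 l_gt0; split.
  by rewrite /lmin; elim/big_ind: _ => // a b a_gt0 b_gt0; rewrite leq_min a_gt0.
move=> k; rewrite /lmin; move: (mem_index_enum k); elim: (index_enum _) => // a r IH.
by rewrite big_cons inE => /orP[/eqP <-|/IH kr]; rewrite geq_min ?leqnn ?kr ?orbT.
Qed.

Theorem lemma4 (R : realFieldType) (alpha beta n s0 K : nat)
    (l : 'I_K -> nat) (mk : 'I_K -> R) (Y : pred int) (Delta : R)
    (P : policy R alpha n) :
  (1 <= alpha)%N -> (1 <= n)%N -> (s0 <= beta)%N -> (0 < K)%N ->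
  (forall k, 0 < l k)%N -> (\sum_(k < K) l k)%N = n ->
  (forall y, Yc alpha beta (lmin n l) y -> Y y) ->
  0 <= Delta ->
  in_Gamma Y beta s0 l mk Delta P ->
  exists F : n.-tuple int -> n.-tuple int,
    (forall y : n.-tuple int, all Y y -> all (Yc alpha beta (lmin n l)) (F y)) /\
    in_Gamma (Yc alpha beta (lmin n l)) beta s0 l mk Delta (push F P).
Proof.
move=> _ n_gt0 s0_le _ l_gt0 l_sum YcY _ PGamma.
have [L_gt0 l_ge_L] := lmin_bounds n_gt0 l_gt0.
have [F clipF] := clip_function alpha beta L_gt0 s0 mk l_sum l_ge_L.
exists F; split => [y _|x]; first exact: (clipF y).1.
have [dist supp cost] := PGamma x.
have feas_supp p : p \in P x -> p.2 != 0 -> feas beta s0 x p.1.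
  by move=> pd pnz; have /andP[] := supp _ (law_nz dist pd pnz).
split; first exact: is_dist_image.
- move=> y /law_image_support [p pd /andP[pnz /eqP <-]].
  by apply/andP; split; [exact: (clipF _).1 | exact: ((clipF _).2 x (feas_supp p pd pnz)).2].
- have sub : {subset Yn_seq (Yc alpha beta (lmin n l)) beta s0 x <= Yn_seq Y beta s0 x}.
    move=> z; rewrite !mem_filter => /andP[/andP[Yz fz] zbox].
    by rewrite zbox andbT /Yn_mem fz andbT; apply: sub_all Yz.
  have nonempty : Yn_seq (Yc alpha beta (lmin n l)) beta s0 x != [::].
    by apply/eqP => empty; have := idle_in_Yn_seq L_gt0 x s0_le; rewrite empty.
  move: cost; rewrite /cost /push expect_cost_image => [|p pd pnz].
    by have := min_over_subset (@mdot R K l mk n) sub nonempty; lra.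
  exact: ((clipF _).2 x (feas_supp p pd pnz)).1.
Qed.
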